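(* The following are equivalent: (i) $\lim_{d\to\infty} n^{X_d}(\varepsilon)=\infty$ for every $\varepsilon\in(0,1)$; (ii) $\lim_{d\to\infty}\bar\lambda^{X_d}_1=0$.
   Context: For each $d\in\mathbb N$, $X_d$ is a random element of a separable Hilbert space $H_d$ with $\mathbb E X_d=0$ and $\mathbb E\|X_d\|_{H_d}^2<\infty$. For a centered Hilbert-space random element $Z$ with finite second moment, $\lambda^Z_1\ge\lambda^Z_2\ge\dots\ge 0$ denote the eigenvalues of its covariance operator $K^Z$ listed with multiplicity (padded with zeros if there are finitely many), $\Lambda^Z=\sum_k\lambda^Z_k=\mathbb E\|Z\|^2$, and $\bar\lambda^Z_k=\lambda^Z_k/\Lambda^Z$. It is assumed that $\lambda^{X_d}_1>0$ for all $d$. The average case approximation complexity is $n^{X_d}(\varepsilon)=\min\{n\in\mathbb N: e^{X_d}(n)\le \varepsilon\, e^{X_d}(0)\}$ for $\varepsilon\in(0,1)$, where $e^{X_d}(0)=(\mathbb E\|X_d\|^2)^{1/2}$ and $e^{X_d}(n)$ is the infimum of $(\mathbb E\|X_d-\sum_{m=1}^n l_m(X_d)\psi_m\|^2)^{1/2}$ over all $\psi_m\in H_d$, $l_m\in H_d^*$; equivalently $n^{X_d}(\varepsilon)=\min\{n\in\mathbb N:\ \sum_{k>n}\bar\lambda^{X_d}_k\le\varepsilon^2\}=\min\{n\in\mathbb N:\sum_{k=1}^n\bar\lambda^{X_d}_k\ge 1-\varepsilon^2\}$. *)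

From Stdlib Require Import Reals Lra ClassicalEpsilon.
Open Scope R_scope.

Fixpoint psum (f : nat -> R) (n : nat) : R :=
  match n with O => 0 | S m => psum f m + f m end.

(* Eigenvalue data of X_d: lam d k = lambda^{X_d}_{k+1} (0-based index),
   Lam d = Lambda^{X_d} = sum_k lam d k. *)
Definition lambar (lam : nat -> nat -> R) (Lam : nat -> R) (d k : nat) : R :=
  lam d k / Lam d.

Definition cplx_ok (lam : nat -> nat -> R) (Lam : nat -> R) (d : nat) (eps : R) (n : nat) : Prop :=
  psum (lambar lam Lam d) n >= 1 - eps ^ 2.

Definition is_least (P : nat -> Prop) (n : nat) : Prop :=
  P n /\ forall m, P m -> (n <= m)%nat.

Definition nX (lam : nat -> nat -> R) (Lam : nat -> R) (d : nat) (eps : R) : nat :=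
  epsilon (inhabits O) (is_least (cplx_ok lam Lam d eps)).

Definition nat_tends_infty (a : nat -> nat) : Prop :=
  forall M : nat, exists D : nat, forall d, (D <= d)%nat -> (M <= a d)%nat.

(** Since the normalized eigenvalues are nonincreasing and sum to 1, any [n]
    with [sum_(k<n) lambar_k >= 1 - eps^2] satisfies
    [1 - eps^2 <= n * lambar_1]; hence [n(eps) >= (1 - eps^2) / lambar_1],
    which blows up when [lambar_1 -> 0].  Conversely [n(eps) = 1] as soon as
    [lambar_1 >= 1 - eps^2], so if [lambar_1] stays above some [c > 0] along
    a subsequence, choosing [eps^2 = 1 - c] keeps [n(eps)] bounded there. *)

From Stdlib Require Import Reals Lra Lia Classical ClassicalEpsilon.
Open Scope R_scope.

Lemma exists_least (P : nat -> Prop) : (exists n, P n) -> exists n, is_least P n.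
Proof.
  intros [n Pn]; induction n as [n IH] using (well_founded_induction Wf_nat.lt_wf).
  destruct (classic (exists m, (m < n)%nat /\ P m)) as [[m [ltmn Pm]] | Hnone].
  - exact (IH m ltmn Pm).
  - exists n; split; [exact Pn |].
    intros m Pm; destruct (Compare_dec.le_lt_dec n m) as [|ltmn]; [assumption |].
    exfalso; apply Hnone; eauto.
Qed.

Lemma psum_S_sum_f_R0 (f : nat -> R) (n : nat) : psum f (S n) = sum_f_R0 f n.
Proof. induction n as [|n IHn]; [simpl; ring |]. simpl in *; rewrite IHn; ring. Qed.

Lemma psum_div (f : nat -> R) (c : R) (n : nat) :
  psum (fun k => f k / c) n = psum f n / c.
Proof. induction n as [|n IHn]; simpl; [|rewrite IHn]; unfold Rdiv; ring. Qed.

Lemma psum_le_mul (f : nat -> R) (b : R) (n : nat) :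
  (forall k, f k <= b) -> psum f n <= INR n * b.
Proof.
  intros Hb; induction n as [|n IHn]; simpl psum; [simpl; lra |].
  rewrite S_INR; specialize (Hb n); lra.
Qed.

Section NonnegSeries.

Variables (f : nat -> R) (L : R).
Hypothesis f_ge0 : forall k, 0 <= f k.
Hypothesis f_sum : infinite_sum f L.

Lemma psum_le_infinite_sum (n : nat) : psum f n <= L.
Proof.
  assert (Hgrow : Un_growing (sum_f_R0 f)).
  { intros m; simpl; specialize (f_ge0 (S m)); lra. }
  pose proof (growing_ineq _ _ Hgrow f_sum) as Hle.
  destruct n as [|n]; [| rewrite psum_S_sum_f_R0; apply Hle].
  specialize (Hle O); specialize (f_ge0 O); simpl in *; lra.
Qed.

Lemma infinite_sum_psum_gt (delta : R) : 0 < delta -> exists n, L - delta < psum f n.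
Proof.
  intros Hdelta; destruct (f_sum delta Hdelta) as [N HN].
  exists (S N); rewrite psum_S_sum_f_R0.
  specialize (HN N (Nat.le_refl N)); unfold Rdist in HN; apply Rabs_def2 in HN; lra.
Qed.

End NonnegSeries.

Section Complexity.

Variables (lam : nat -> nat -> R) (Lam : nat -> R).
Hypothesis lam_ge0 : forall d k, 0 <= lam d k.
Hypothesis lam_decr : forall d k, lam d (S k) <= lam d k.
Hypothesis lam_sum : forall d, infinite_sum (lam d) (Lam d).
Hypothesis lam0_gt0 : forall d, 0 < lam d O.

Lemma Lam_gt0 (d : nat) : 0 < Lam d.
Proof.
  pose proof (psum_le_infinite_sum _ _ (lam_ge0 d) (lam_sum d) 1) as H1.
  specialize (lam0_gt0 d); simpl in H1; lra.
Qed.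

Lemma lambar_ge0 (d k : nat) : 0 <= lambar lam Lam d k.
Proof.
  unfold lambar, Rdiv; apply Rmult_le_pos; [apply lam_ge0 |].
  left; apply Rinv_0_lt_compat, Lam_gt0.
Qed.

Lemma lambar_le_first (d k : nat) : lambar lam Lam d k <= lambar lam Lam d O.
Proof.
  unfold lambar, Rdiv; apply Rmult_le_compat_r.
  - left; apply Rinv_0_lt_compat, Lam_gt0.
  - induction k as [|k IHk]; [lra |]; specialize (lam_decr d k); lra.
Qed.

Lemma cplx_ok_exists (d : nat) (eps : R) : 0 < eps -> exists n, cplx_ok lam Lam d eps n.
Proof.
  intros Heps; pose proof (Lam_gt0 d) as HL.
  destruct (infinite_sum_psum_gt _ _ (lam_sum d) (Lam d * eps ^ 2)) as [n Hn].
  { apply Rmult_lt_0_compat; [exact HL | apply pow_lt, Heps]. }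
  exists n; unfold cplx_ok, lambar; rewrite psum_div.
  apply Rle_ge, (Rmult_le_reg_r (Lam d)); [exact HL |].
  unfold Rdiv; rewrite Rmult_assoc, Rinv_l by lra; lra.
Qed.

Lemma nX_spec (d : nat) (eps : R) :
  0 < eps -> is_least (cplx_ok lam Lam d eps) (nX lam Lam d eps).
Proof.
  intros Heps; unfold nX; apply epsilon_spec, exists_least, cplx_ok_exists, Heps.
Qed.

Lemma nX_le_1 (d : nat) (eps : R) :
  0 < eps -> 1 - eps ^ 2 <= lambar lam Lam d O -> (nX lam Lam d eps <= 1)%nat.
Proof.
  intros Heps Hfirst; apply (proj2 (nX_spec d eps Heps)).
  unfold cplx_ok; simpl; lra.
Qed.

Lemma nX_lower_bound (d : nat) (eps : R) :
  0 < eps -> 1 - eps ^ 2 <= INR (nX lam Lam d eps) * lambar lam Lam d O.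
Proof.
  intros Heps; pose proof (proj1 (nX_spec d eps Heps)) as Hok; unfold cplx_ok in Hok.
  pose proof (psum_le_mul _ _ (nX lam Lam d eps) (lambar_le_first d)); lra.
Qed.

Lemma nX_tends_infty_of_lambar_cv (eps : R) :
  0 < eps < 1 -> Un_cv (fun d => lambar lam Lam d O) 0 ->
  nat_tends_infty (fun d => nX lam Lam d eps).
Proof.
  intros Heps Hcv M.
  assert (Hgap : 0 < 1 - eps ^ 2) by (simpl; nra).
  assert (HM : 0 < INR M + 1) by (pose proof (pos_INR M); lra).
  destruct (Hcv ((1 - eps ^ 2) / (INR M + 1))) as [D HD].
  { apply Rlt_gt, Rdiv_lt_0_compat; assumption. }
  exists D; intros d Hd; specialize (HD d Hd); unfold Rdist in HD.
  rewrite Rminus_0_r, Rabs_right in HD by apply Rle_ge, lambar_ge0.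
  apply (Rmult_lt_compat_r (INR M + 1)) in HD; [|exact HM].
  unfold Rdiv in HD; rewrite Rmult_assoc, Rinv_l, Rmult_1_r in HD by lra.
  pose proof (nX_lower_bound d eps (proj1 Heps)) as Hlow.
  pose proof (lambar_ge0 d O).
  destruct (Compare_dec.le_lt_dec M (nX lam Lam d eps)) as [|Hlt]; [assumption |].
  apply lt_INR in Hlt; exfalso; nra.
Qed.

Lemma lambar_cv_of_nX_tends_infty :
  (forall eps, 0 < eps < 1 -> nat_tends_infty (fun d => nX lam Lam d eps)) ->
  Un_cv (fun d => lambar lam Lam d O) 0.
Proof.
  intros Hinf c Hc.
  set (t := Rmin c 1 / 2).
  assert (Ht : 0 < t < 1) by (unfold t; pose proof (Rmin_r c 1);
                             pose proof (Rmin_glb_lt c 1 0 Hc Rlt_0_1); lra).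
  assert (Htc : t < c) by (unfold t; pose proof (Rmin_l c 1); lra).
  set (eps := sqrt (1 - t)).
  assert (Heps2 : eps ^ 2 = 1 - t) by (apply pow2_sqrt; lra).
  assert (Heps : 0 < eps < 1).
  { split; [apply sqrt_lt_R0; lra |].
    rewrite <- sqrt_1; apply sqrt_lt_1_alt; lra. }
  destruct (Hinf eps Heps 2%nat) as [D HD].
  exists D; intros d Hd; specialize (HD d Hd); unfold Rdist.
  rewrite Rminus_0_r, Rabs_right by apply Rle_ge, lambar_ge0.
  destruct (Rlt_le_dec (lambar lam Lam d O) t) as [|Hge]; [lra |].
  assert (Hle1 := nX_le_1 d eps (proj1 Heps) ltac:(lra)); simpl in HD; lia.
Qed.

End Complexity.

Theorem proposition1 (lam : nat -> nat -> R) (Lam : nat -> R)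
  (Hnn : forall d k, 0 <= lam d k)
  (Hdec : forall d k, lam d (S k) <= lam d k)
  (Hsum : forall d, infinite_sum (lam d) (Lam d))
  (Hpos : forall d, 0 < lam d O) :
  (forall eps, 0 < eps < 1 -> nat_tends_infty (fun d => nX lam Lam d eps))
  <-> Un_cv (fun d => lambar lam Lam d O) 0.
Proof.
  split.
  - exact (lambar_cv_of_nX_tends_infty lam Lam Hnn Hsum Hpos).
  - intros Hcv eps Heps.
    exact (nX_tends_infty_of_lambar_cv lam Lam Hnn Hdec Hsum Hpos eps Heps Hcv).
Qed.
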